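(* Let $b_1>b_2>0$, $m\in\mathbb R$ and $d\ge1$. Let $Y_1\sim b_1\chi^2_d$ and $Y_2\sim b_2\chi^2_d$ (not necessarily independent). Then $$\mathbb P(Y_1-Y_2\le m)\le \exp\!\Bigl(m\,\frac{b_1-b_2}{8b_1b_2}\Bigr)\rho^{d/4},\qquad \rho=1-\Bigl(\frac{b_1-b_2}{b_1+b_2}\Bigr)^2<1.$$
   Context: For $b>0$, ''$Y\sim b\chi^2_d$'' means $Y/b$ has the chi-squared distribution with $d$ degrees of freedom. *)

From HB Require Import structures.
From mathcomp Require Import all_boot all_order all_algebra.
From mathcomp Require Import all_classical all_reals all_analysis.
Set Implicit Arguments. Unset Strict Implicit. Unset Printing Implicit Defensive.
Import Order.TTheory GRing.Theory Num.Theory.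
Local Open Scope classical_set_scope.
Local Open Scope ring_scope.

Definition chi2_kernel {R : realType} (d : nat) (x : R) : R :=
  if 0 < x then x `^ (d%:R / 2 - 1) * expR (- x / 2) else 0.

(* Normalized chi-squared density: kernel divided by its total Lebesgue
   integral (which equals 2^(d/2) Gamma(d/2)). *)
Definition chi2_pdf {R : realType} (d : nat) (x : R) : R :=
  chi2_kernel d x / Rintegral (@lebesgue_measure R) setT (chi2_kernel d).

Definition is_chi2 {R : realType} (dT : measure_display) (T : measurableType dT)
  (P : probability T R) (X : T -> R) (d : nat) : Prop :=
  forall A : set R, measurable A ->
    P (X @^-1` A) = (\int[@lebesgue_measure R]_(x in A) (chi2_pdf d x)%:E)%E.

Definition is_scaled_chi2 {R : realType} (dT : measure_display)
  (T : measurableType dT) (P : probability T R) (Y : T -> R) (b : R) (d : nat)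
  : Prop :=
  is_chi2 P (fun w => Y w / b) d.

(* Chernoff's method without independence: on the event {Y1 - Y2 <= m} and
   for t > 0, 1 <= e^(tm) e^(-t Y1) e^(t Y2), and by AM-GM the product
   e^(-t Y1) e^(t Y2) is at most (l e^(-2t Y1) + e^(2t Y2) / l) / 2 for every
   l > 0, so P(Y1 - Y2 <= m) is bounded through the moment generating
   functions of Y1 and Y2 taken separately.  If Y ~ b chi2_d, then
   E e^(sY) = (1 - 2sb)^(-d/2), which follows from the density by the change
   of variables x -> (1 - 2sb) x.  For t = (b1 - b2) / (8 b1 b2) these are
   ((b1 + b2) / (2 b2))^(-d/2) and ((b1 + b2) / (2 b1))^(-d/2); the optimal l
   balances the two terms, whose geometric mean is rho^(d/4). *)

From HB Require Import structures.
From mathcomp Require Import all_boot all_order all_algebra.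
From mathcomp Require Import all_classical all_reals all_analysis.
From mathcomp Require Import measurable_realfun ring lra.
Import Order.TTheory GRing.Theory Num.Theory.
Local Open Scope classical_set_scope.
Local Open Scope ring_scope.

Lemma powRrMn {R : realType} (x r : R) n : 0 <= x ->
  x `^ (r * n%:R) = (x `^ r) ^+ n.
Proof. by move=> x_ge0; rewrite powRrM powR_mulrn ?powR_ge0. Qed.

Section lebesgue_measure_scale.
Context {R : realType} (c : R) (c_gt0 : 0 < c).
Local Notation mu := (@lebesgue_measure R).
Local Open Scope ereal_scope.

Let scale (x : measurableTypeR R) : measurableTypeR R := (c * x)%R.

Let measurable_scale : measurable_fun setT scale.
Proof. exact: mulrl_measurable. Qed.

Let lebesgue_measure_scale A : measurable A ->
  mu A = c%:E * pushforward mu scale A.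
Proof.
move=> mA.
have := @lebesgue_measure_unique R
  (mscale (NngNum (ltW c_gt0)) (pushforward mu scale)).
move=> /(_ measurable_scale); apply => // _ [[a b] _ <-].
change (mu `]a, b] = c%:E * mu (scale @^-1` `]a, b])).
have -> : scale @^-1` `]a, b]%classic = `](a / c)%R, (b / c)%R]%classic.
  by apply/seteqP; split => x /=;
    rewrite !in_itv /= ltr_pdivrMr // ler_pdivlMr // ![(x * c)%R]mulrC.
rewrite !lebesgue_measure_itv /= !lte_fin ltr_pM2r ?invr_gt0 //.
case: ifP => _; last by rewrite mule0.
by rewrite -EFinD -EFinM -mulrBl mulrCA divff ?gt_eqF ?mulr1.
Qed.

Lemma ge0_integral_scale (f : R -> \bar R) :
  measurable_fun setT f -> (forall x, 0 <= f x) ->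
  \int[mu]_x f x = c%:E * \int[mu]_x f (c * x)%R.
Proof.
move=> mf f_ge0.
have -> : \int[mu]_x f (c * x)%R = \int[pushforward mu scale]_x f x.
  by rewrite ge0_integral_pushforward.
rewrite -(ge0_integral_mscale _ _ (NngNum (ltW c_gt0))) //.
by apply: eq_measure_integral => A mA _; exact: lebesgue_measure_scale.
Qed.

End lebesgue_measure_scale.

Section integral_density.
Context {d} {T : measurableType d} {R : realType}.
Context {nu : {finite_measure set T -> \bar R}}
  {mu : {sigma_finite_measure set T -> \bar R}} {g : T -> R}.
Hypotheses (mg : measurable_fun setT g) (g_ge0 : forall x, 0 <= g x)
  (nuE : forall A, measurable A -> nu A = (\int[mu]_(x in A) (g x)%:E)%E).
Local Open Scope ereal_scope.

Let nu_dominated : nu `<< mu.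
Proof.
apply/null_content_dominatesP => A mA muA0; rewrite nuE //.
by apply: null_set_integral => //; exact/measurable_funTS/measurable_EFinP.
Qed.

Local Notation RN := (Radon_Nikodym_SigmaFinite.f nu mu).

Let RN_ae_density : ae_eq mu setT RN (EFin \o g).
Proof.
apply: integral_ae_eq => //.
- exact: Radon_Nikodym_SigmaFinite.f_integrable.
- exact/measurable_EFinP.
- by move=> A _ mA; rewrite -Radon_Nikodym_SigmaFinite.f_integral // nuE.
Qed.

Lemma ge0_integral_density (f : T -> \bar R) E : measurable E ->
  measurable_fun E f -> (forall x, 0 <= f x) ->
  \int[nu]_(x in E) f x = \int[mu]_(x in E) (f x * (g x)%:E).
Proof.
move=> mE mf f_ge0.
have mRN : measurable_fun setT RN.
  exact/measurable_int/Radon_Nikodym_SigmaFinite.f_integrable.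
rewrite -(Radon_Nikodym_SigmaFinite.change_of_variables nu_dominated) //.
apply: ge0_ae_eq_integral => //.
- by apply: emeasurable_funM => //; exact: measurable_funTS.
- apply: emeasurable_funM => //; apply: measurable_funTS.
  exact/measurable_EFinP.
- by move=> x _; rewrite mule_ge0 // Radon_Nikodym_SigmaFinite.f_ge0.
- by move=> x _; rewrite mule_ge0 // lee_fin.
- exact/ae_eqe_mul2l/(ae_eq_subset (subsetT E) RN_ae_density).
Qed.

End integral_density.

Section chi2_kernel.
Context {R : realType} (d : nat).
Local Notation k := (@chi2_kernel R d).

Lemma measurable_chi2_kernel : measurable_fun setT k.
Proof.
apply: measurable_fun_ifT => //; first exact: measurable_fun_ltr.
apply: measurable_funM; first exact: measurable_powR.
apply: measurableT_comp => //.
by apply: measurable_funM => //; exact: oppr_measurable.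
Qed.

Lemma chi2_kernel_ge0 x : 0 <= k x.
Proof.
rewrite /chi2_kernel; case: ifP => // _.
by rewrite mulr_ge0 ?powR_ge0 ?expR_ge0.
Qed.

Lemma expR_mul_chi2_kernel s x : 0 < 1 - 2 * s ->
  expR (s * x) * k x = (1 - 2 * s) `^ (1 - d%:R / 2) * k ((1 - 2 * s) * x).
Proof.
set c := 1 - 2 * s => c_gt0; rewrite /chi2_kernel pmulr_rgt0 //.
case: ifP => x_gt0; last by rewrite !mulr0.
have powR_cancel : c `^ (1 - d%:R / 2) * c `^ (d%:R / 2 - 1) = 1.
  by rewrite -powRD ?(gt_eqF c_gt0) ?implybT // addrA subrK subrr powRr0.
have -> : expR (- (c * x) / 2) = expR (s * x) * expR (- x / 2).
  by rewrite -expRD /c; congr expR; field.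
by rewrite powRM ?ltW // !mulrA powR_cancel mul1r [expR (s * x) * _]mulrC.
Qed.

Lemma measurable_chi2_pdf : measurable_fun setT (@chi2_pdf R d).
Proof.
rewrite /chi2_pdf; apply: measurable_funM => //.
exact: measurable_chi2_kernel.
Qed.

Lemma chi2_pdf_ge0 (x : R) : 0 <= chi2_pdf d x.
Proof.
rewrite /chi2_pdf divr_ge0 ?chi2_kernel_ge0 // /Rintegral fine_ge0 //.
by apply: integral_ge0 => y _; rewrite lee_fin chi2_kernel_ge0.
Qed.

End chi2_kernel.

Section chi2_law.
Context {R : realType} (d : nat) (nu : probability (measurableTypeR R) R).
Local Notation mu := (@lebesgue_measure R).
Local Notation k := (@chi2_kernel R d).
Local Notation Z := (Rintegral mu setT k).
Hypothesis nu_chi2 : forall A, measurable A ->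
  nu A = (\int[mu]_(x in A) (chi2_pdf d x)%:E)%E.
Local Open Scope ereal_scope.

Lemma chi2_normalizing_constant : \int[mu]_x (k x)%:E = Z%:E /\ (0 < Z)%R.
Proof.
have Z_neq0 : Z != 0%R.
  apply/eqP => Z0; have := probability_setT nu.
  rewrite nu_chi2 // /chi2_pdf Z0.
  under eq_integral do rewrite invr0 mulr0.
  by rewrite integral0 => /eqP; rewrite eq_sym onee_eq0.
have I_ge0 : 0 <= \int[mu]_x (k x)%:E.
  by apply: integral_ge0 => x _; rewrite lee_fin chi2_kernel_ge0.
have I_fin : \int[mu]_x (k x)%:E \is a fin_num.
  rewrite ge0_fin_numE // ltey; apply: contra Z_neq0 => /eqP I_oo.
  by rewrite /Rintegral I_oo.
split; first by rewrite /Rintegral fineK.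
by rewrite lt_def Z_neq0 fine_ge0.
Qed.

Lemma chi2_mgf s : (0 < 1 - 2 * s)%R ->
  \int[nu]_x (expR (s * x))%:E = ((1 - 2 * s) `^ (- (d%:R / 2)))%:E.
Proof.
set c := (1 - 2 * s)%R => c_gt0.
have [int_k Z_gt0] := chi2_normalizing_constant.
have mk : measurable_fun setT (fun x => (k x)%:E).
  by apply/measurable_EFinP; exact: measurable_chi2_kernel.
have int_k_scaled : \int[mu]_x (k (c * x))%:E = (c^-1 * Z)%:E.
  rewrite EFinM -int_k [in RHS](ge0_integral_scale _ c_gt0) //.
    by rewrite muleA -EFinM mulVf ?gt_eqF // mul1e.
  by move=> x; rewrite lee_fin chi2_kernel_ge0.
have mpdf : measurable_fun [set: measurableTypeR R] (chi2_pdf d : _ -> R).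
  exact: measurable_chi2_pdf.
rewrite (ge0_integral_density mpdf (@chi2_pdf_ge0 _ d) nu_chi2) //; last first.
  by apply/measurable_EFinP; apply: measurableT_comp.
under eq_integral do
  rewrite /chi2_pdf -EFinM mulrA expR_mul_chi2_kernel // mulrAC EFinM.
rewrite ge0_integralZl //; last 3 first.
- apply/measurable_EFinP; apply: measurableT_comp => //.
  exact: measurable_chi2_kernel.
- by move=> x _; rewrite lee_fin chi2_kernel_ge0.
- by rewrite lee_fin divr_ge0 ?powR_ge0 ?ltW.
rewrite int_k_scaled -EFinM -/c; congr EFin.
rewrite -[(c^-1)%R]powR_inv1 ?ltW // mulrACA mulVf ?gt_eqF // mulr1.
by rewrite -powRD ?(gt_eqF c_gt0) ?implybT // addrAC subrr add0r.
Qed.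

End chi2_law.

Section chi2_random_variable.
Context {R : realType} {dT : measure_display} {T : measurableType dT}
  {P : probability T R} {d : nat}.
Local Open Scope ereal_scope.

Lemma chi2_expectation_expR (X : T -> R) s : measurable_fun setT X ->
  is_chi2 P X d -> (0 < 1 - 2 * s)%R ->
  \int[P]_w (expR (s * X w))%:E = ((1 - 2 * s) `^ (- (d%:R / 2)))%:E.
Proof.
move=> mX X_chi2 s_lt.
(* The law of X, as a measure on the space carrying the Lebesgue measure. *)
pose Xm := @mfun_Sub _ _ T (measurableTypeR R) X (mem_set mX).
rewrite -(@chi2_mgf _ d (distribution P Xm) X_chi2) //.
rewrite ge0_integral_distribution //.
by apply/measurable_EFinP; apply: measurableT_comp.
Qed.

Lemma scaled_chi2_expectation_expR (Y : {RV P >-> R}) b s : (0 < b)%R ->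
  is_scaled_chi2 P Y b d -> (0 < 1 - 2 * s * b)%R ->
  \int[P]_w (expR (s * Y w))%:E = ((1 - 2 * s * b) `^ (- (d%:R / 2)))%:E.
Proof.
move=> b_gt0 Y_chi2 sb_lt; rewrite -mulrA in sb_lt *.
rewrite -(chi2_expectation_expR _ _ _ Y_chi2 sb_lt); last first.
  by apply: measurable_funM => //; exact: measurable_cst.
by apply: eq_integral => w _; rewrite -mulrA [(b * _)%R]mulrC divfK ?gt_eqF.
Qed.

End chi2_random_variable.

Lemma chernoff_amgm_ge1 {R : realType} (x1 x2 m t a b : R) :
  0 <= t -> 0 < a -> 0 < b -> x1 - x2 <= m ->
  1 <= expR (t * m) / 2 *
         (b / a * expR (- (2 * t) * x1) + a / b * expR (2 * t * x2)).
Proof.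
move=> t_ge0 a_gt0 b_gt0 le_m.
set u := expR (- (t * x1)); set v := expR (t * x2).
have -> : expR (- (2 * t) * x1) = u ^+ 2.
  by rewrite -expRM_natr; congr expR; ring.
have -> : expR (2 * t * x2) = v ^+ 2.
  by rewrite -expRM_natr; congr expR; ring.
have chernoff : 1 <= expR (t * m) * (u * v).
  rewrite -!expRD -expR0 ler_expR.
  have : 0 <= t * (m - (x1 - x2)) by rewrite mulr_ge0 ?subr_ge0.
  lra.
have amgm : 2 * (u * v) <= b / a * u ^+ 2 + a / b * v ^+ 2.
  have : 0 <= (b * u - a * v) ^+ 2 / (a * b).
    by rewrite divr_ge0 ?sqr_ge0 ?mulr_ge0 ?ltW.
  have -> : (b * u - a * v) ^+ 2 / (a * b) =
      b / a * u ^+ 2 + a / b * v ^+ 2 - 2 * (u * v).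
    by field; rewrite !gt_eqF.
  lra.
apply: (le_trans chernoff); rewrite -mulrA ler_pM2l ?expR_gt0 //.
lra.
Qed.

Section difference_tail_bound.
Context {R : realType} {dT : measure_display} {T : measurableType dT}
  {P : probability T R}.
Local Open Scope ereal_scope.

Lemma prob_sub_le_expR (X1 X2 : {RV P >-> R}) (m t a b : R) :
  (0 < t)%R -> (0 < a)%R -> (0 < b)%R ->
  \int[P]_w (expR (- (2 * t) * X1 w))%:E = (a ^+ 2)%:E ->
  \int[P]_w (expR (2 * t * X2 w))%:E = (b ^+ 2)%:E ->
  P [set w | (X1 w - X2 w <= m)%R] <= (expR (t * m) * (a * b))%:E.
Proof.
move=> t_gt0 a_gt0 b_gt0 E1 E2.
set f1 := fun w => (expR (- (2 * t) * X1 w))%:E.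
set f2 := fun w => (expR (2 * t * X2 w))%:E.
have f1_ge0 w : 0 <= f1 w by rewrite lee_fin expR_ge0.
have f2_ge0 w : 0 <= f2 w by rewrite lee_fin expR_ge0.
have mf1 : measurable_fun setT f1.
  apply/measurable_EFinP; apply: measurableT_comp => //.
  exact: measurable_funM.
have mf2 : measurable_fun setT f2.
  apply/measurable_EFinP; apply: measurableT_comp => //.
  exact: measurable_funM.
have ba_ge0 : 0 <= (b / a)%:E by rewrite lee_fin divr_ge0 ?ltW.
have ab_ge0 : 0 <= (a / b)%:E by rewrite lee_fin divr_ge0 ?ltW.
set g1 := fun w => (b / a)%:E * f1 w; set g2 := fun w => (a / b)%:E * f2 w.
have g1_ge0 w : 0 <= g1 w by rewrite mule_ge0.
have g2_ge0 w : 0 <= g2 w by rewrite mule_ge0.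
have mg1 : measurable_fun setT g1 by exact: emeasurable_funM.
have mg2 : measurable_fun setT g2 by exact: emeasurable_funM.
have mg : measurable_fun setT (fun w => g1 w + g2 w) by exact: emeasurable_funD.
have int_g : \int[P]_w (g1 w + g2 w) = (b / a * a ^+ 2 + a / b * b ^+ 2)%:E.
  rewrite (ge0_integralD _ measurableT (fun w _ => g1_ge0 w) mg1
    (fun w _ => g2_ge0 w) mg2).
  rewrite (ge0_integralZl _ measurableT mf1 (fun w _ => f1_ge0 w)) //.
  by rewrite (ge0_integralZl _ measurableT mf2 (fun w _ => f2_ge0 w)) // E1 E2.
have mE : measurable [set w | (X1 w - X2 w <= m)%R].
  rewrite -[X in measurable X]setTI.
  by apply: measurable_fun_le => //; exact: measurable_funB.
rewrite -(setIT [set w | _]) -integral_indic //.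
apply: (@le_trans _ _ (\int[P]_w ((expR (t * m) / 2)%:E * (g1 w + g2 w)))).
  apply: ge0_le_integral => //.
  - exact/measurable_EFinP/measurable_indic.
  - exact: emeasurable_funM.
  move=> w _; rewrite /g1 /g2 /f1 /f2 -!EFinM lee_fin indicE.
  have [/set_mem le_m|_] /= := boolP (w \in _).
    by apply: chernoff_amgm_ge1 => //; exact: ltW.
  by rewrite mulr_ge0 ?addr_ge0 ?mulr_ge0 ?expR_ge0 ?invr_ge0 ?ltW.
have g_ge0 w : 0 <= g1 w + g2 w by rewrite adde_ge0.
rewrite (ge0_integralZl _ measurableT mg (fun w _ => g_ge0 w));
  last by rewrite lee_fin divr_ge0 ?expR_ge0.
have balanced : (expR (t * m) / 2 * (b / a * a ^+ 2 + a / b * b ^+ 2) =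
    expR (t * m) * (a * b))%R by field; rewrite !gt_eqF.
by rewrite int_g -EFinM balanced.
Qed.

End difference_tail_bound.

Theorem lemma3p3 (R : realType) (dT : measure_display) (T : measurableType dT)
  (P : probability T R) (b1 b2 m : R) (d : nat)
  (Y1 Y2 : {RV P >-> R}) :
  0 < b2 -> b2 < b1 -> (1 <= d)%N ->
  is_scaled_chi2 P Y1 b1 d -> is_scaled_chi2 P Y2 b2 d ->
  let rho := 1 - ((b1 - b2) / (b1 + b2)) ^+ 2 in
  rho < 1 /\
  (P [set w | (Y1 w - Y2 w <= m)%R] <=
    (expR (m * ((b1 - b2) / (8 * b1 * b2))) * rho `^ (d%:R / 4))%R%:E)%E.
Proof.
move=> b2_gt0 b2_lt_b1 _ Y1_chi2 Y2_chi2 rho.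
have b1_gt0 : 0 < b1 := lt_trans b2_gt0 b2_lt_b1.
split.
  by rewrite gtrDl oppr_lt0 exprn_gt0 // divr_gt0 ?subr_gt0 ?addr_gt0.
set t := (b1 - b2) / (8 * b1 * b2).
have t_gt0 : 0 < t by rewrite divr_gt0 ?subr_gt0 ?mulr_gt0.
pose al := (b1 + b2) / (2 * b2); pose be := (b1 + b2) / (2 * b1).
have al_gt0 : 0 < al by rewrite divr_gt0 ?addr_gt0 ?mulr_gt0.
have be_gt0 : 0 < be by rewrite divr_gt0 ?addr_gt0 ?mulr_gt0.
have alE : 1 - 2 * (- (2 * t)) * b1 = al.
  by rewrite /t /al; field; rewrite !gt_eqF.
have beE : 1 - 2 * (2 * t) * b2 = be.
  by rewrite /t /be; field; rewrite !gt_eqF.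
have mgf_Y1 := scaled_chi2_expectation_expR _ _ (- (2 * t)) b1_gt0 Y1_chi2.
have mgf_Y2 := scaled_chi2_expectation_expR _ _ (2 * t) b2_gt0 Y2_chi2.
rewrite alE in mgf_Y1; rewrite beE in mgf_Y2.
have d2E : - (d%:R / 2) = - (d%:R / 4) * 2%:R :> R by field.
rewrite d2E !powRrMn ?ltW // in mgf_Y1 mgf_Y2.
have rhoE : rho = (al * be) `^ (-1).
  rewrite powR_inv1 ?(mulr_ge0 (ltW al_gt0) (ltW be_gt0)) // /rho /al /be.
  by field; rewrite !gt_eqF ?addr_gt0.
rewrite (mulrC m t) rhoE -powRrM mulN1r (powRM _ (ltW al_gt0) (ltW be_gt0)).
exact: prob_sub_le_expR t_gt0 (powR_gt0 _ al_gt0) (powR_gt0 _ be_gt0)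
  (mgf_Y1 al_gt0) (mgf_Y2 be_gt0).
Qed.
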